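(* Let $p$ be an odd prime and $k\ge 0$. For every $s\ge 1$, every $0\le l<p^k$ and every $0\le l'<p^{k+1}$, $$\sum_{P\in\mathcal P(V_{s,l})}(-1)^{\mathrm{inv}(P)}=0\qquad\text{and}\qquad \sum_{P\in\mathcal P(W_{s+1,l'})}(-1)^{\mathrm{inv}(P)}=0 .$$
   Context: Fix an odd prime $p$ and an integer $k\ge 0$. For integers $0\le i<n$ write $\lambda(n,i)=(n-i,1^i)$ for the hook partition of $n$ with $n-i$ boxes in its first row and $i$ further boxes in its first column. If $\mu=\lambda(n',i')$ is obtained from $\lambda(n,i)$ by appending $m=(n'-i')-(n-i)\ge 0$ boxes to the first row and $n''=i'-i\ge 0$ boxes to the first column, we say $\mu$ is obtained by adding the block $B_{m,n''}$ ($m$ horizontal nodes, $n''$ vertical nodes). Put $x_s=p^k(sp-(s+1))$. The relevant part (''column $k$'') of the $p$-Bratteli diagram is the graded directed graph with vertices: on floor $2k+1$, $S_i=\lambda(p^k(p-1),i)$ for $0\le i<p^k(p-1)$; on floor $2(k+s)$ ($s\ge1$), $V_{s,l}=\lambda\big(p^k(2sp-(2s+1)),\,x_s+l\big)$ for $0\le l<p^k$; on floor $2(k+s)-1$ ($s\ge2$), $W_{s,l'}=\lambda\big(p^k((2s-1)p-2s),\,x_{s-1}+l'\big)$ for $0\le l'<p^{k+1}$; and edges, each labelled by the block added: (E1) $S_i\to V_{1,l}$ exactly when $i=p^kt+l$ with $0\le t\le p-2$, block $B_{p^kt,\,p^k(p-2-t)}$; (E2) for $s\ge2$, $0\le l<p^k$,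 $0\le\beta\le p-1$: $V_{s-1,l}\to W_{s,pl+\beta}$, block $B_{p^k(p-1)-((p-1)l+\beta),\,(p-1)l+\beta}$; (E3) for $s\ge 2$, $0\le l'<p^{k+1}$ and $t=\lfloor l'/p^k\rfloor$: $W_{s,l'}\to V_{s,l'-p^kt}$, block $B_{p^kt,\,p^k(p-1-t)}$. A path ending at a vertex $v$ is a sequence of edges starting at some $S_i$ and going up one floor at a time to $v$ ($S_i\to V_{1,\cdot}\to W_{2,\cdot}\to V_{2,\cdot}\to W_{3,\cdot}\to\cdots\to v$); $\mathcal P(v)$ is the set of all paths ending at $v$. The blocks of a path are numbered $B^2,B^3,\dots,B^N$: $B^2$ is the block of the edge leaving $S_i$, and for $j\ge2$, $B^{2j-1}$ is the block of the edge into $W_{j,\cdot}$ and $B^{2j}$ the block of the edge into $V_{j,\cdot}$. Write $B^j=B_{m_j,n_j}$. Inversions: $(1,2)\in\mathrm{Inv}(P)$ iff $m_2=p^kt$ with $0\le t<\frac{p-1}{2}$; for $3\le i<j\le N$, $(i,j)\in\mathrm{Inv}(P)$ iff $m_i>m_j$ and $n_i<n_j$; no other pairs are inversions. $\mathrm{inv}(P)=|\mathrm{Inv}(P)|$. *)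

From HB Require Import structures.
From mathcomp Require Import all_boot all_order all_algebra.
Set Implicit Arguments. Unset Strict Implicit. Unset Printing Implicit Defensive.
Import GRing.Theory.

(* Vertices of "column k" of the p-Bratteli diagram:
   VS i    = S_i     (floor 2k+1),
   VV s l  = V_{s,l} (floor 2(k+s)),
   VW s l' = W_{s,l'} (floor 2(k+s)-1). *)
Inductive vtx := VS of nat | VV of nat & nat | VW of nat & nat.

Definition vtx_code (v : vtx) : nat * nat * nat :=
  match v with VS i => (0, 0, i) | VV s l => (1, s, l) | VW s l => (2, s, l) end.
Definition vtx_decode (c : nat * nat * nat) : vtx :=
  match c with (0, _, i) => VS i | (1, s, l) => VV s l | (_, s, l) => VW s l end.
Lemma vtx_codeK : cancel vtx_code vtx_decode. Proof. by case. Qed.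
HB.instance Definition _ := Equality.copy vtx (can_type vtx_codeK).

Definition vfloor (k : nat) (v : vtx) : nat :=
  match v with
  | VS _ => (2 * k).+1
  | VV s _ => 2 * (k + s)
  | VW s _ => (2 * (k + s)).-1
  end.

Definition vlevel (v : vtx) : nat :=
  match v with VS _ => 0 | VV s _ => s | VW s _ => s end.

(* Edges: [edge p k u w = Some (m, n)] iff there is an edge u -> w, labelled by
   the block B_{m,n}; [None] iff there is no edge. *)
Definition edge (p k : nat) (u w : vtx) : option (nat * nat) :=
  match u, w with
  | VS i, VV 1 l =>
      (* (E1): i = p^k t + l, 0 <= t <= p-2, block B_{p^k t, p^k (p-2-t)} *)
      if [&& i < p ^ k * (p - 1), l < p ^ k & i %% p ^ k == l] then
        let t := i %/ p ^ k in Some (p ^ k * t, p ^ k * (p - 2 - t))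
      else None
  | VV s1 l, VW s2 l' =>
      if [&& 1 <= s1, s2 == s1.+1, l < p ^ k & l' %/ p == l] then
        let beta := l' %% p in
        let c := (p - 1) * l + beta in
        Some (p ^ k * (p - 1) - c, c)
      else None
  | VW s1 l', VV s2 l =>
      if [&& 2 <= s1, s2 == s1, l' < p ^ (k.+1) & l == l' - p ^ k * (l' %/ p ^ k)]
      then let t := l' %/ p ^ k in Some (p ^ k * t, p ^ k * (p - 1 - t))
      else None
  | _, _ => None
  end.

Definition column (p k smax : nat) : seq vtx :=
  [seq VS i | i <- iota 0 (p ^ k * (p - 1))]
  ++ [seq VV s l | s <- iota 1 smax, l <- iota 0 (p ^ k)]
  ++ [seq VW s l | s <- iota 2 (smax - 1), l <- iota 0 (p ^ k.+1)].

Fixpoint lists_of (T : Type) (xs : seq T) (n : nat) : seq (seq T) :=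
  match n with
  | 0 => [:: [::]]
  | n.+1 => [seq x :: l | x <- xs, l <- lists_of xs n]
  end.

Definition is_start (p k : nat) (u : vtx) : bool :=
  if u is VS i then i < p ^ k * (p - 1) else false.

Definition is_path (p k : nat) (v : vtx) (P : seq vtx) : bool :=
  match P with
  | [::] => false
  | u :: rest =>
      [&& is_start p k u,
          path (fun a b => (edge p k a b != None) && (vfloor k b == (vfloor k a).+1))
               u rest
        & last u rest == v]
  end.

Definition paths_to (p k : nat) (v : vtx) : seq (seq vtx) :=
  [seq P <- lists_of (column p k (vlevel v)) (vfloor k v - 2 * k) | is_path p k v P].

(* The blocks B^2, ..., B^N of a path with N vertices. *)
Definition blocks (p k : nat) (P : seq vtx) : seq (nat * nat) :=
  match P with
  | [::] => [::]
  | u :: rest => pmap id (pairmap (edge p k) u rest)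
  end.

Definition inv (p k : nat) (bs : seq (nat * nat)) : nat :=
  let N := (size bs).+1 in
  let B j := nth (0, 0) bs (j - 2) in
  nat_of_bool (if bs is (m2, _) :: _ then [exists t : 'I_((p - 1)./2), m2 == p ^ k * t]
               else false)
  + \sum_(3 <= i < N.+1) \sum_(i.+1 <= j < N.+1)
       nat_of_bool (((B j).1 < (B i).1) && ((B i).2 < (B j).2)).

Definition signed_count (p k : nat) (v : vtx) : int :=
  (\sum_(P <- paths_to p k v) (-1) ^+ inv p k (blocks p k P))%R.

(* Fix the tail Q of a path, from V_{1,l} upwards, and vary its start S_i.
   Only the inversion (1,2) depends on S_i, through t = i / p^k; all other
   inversions involve the blocks B^3, ..., B^N of Q alone.  The starts with
   i mod p^k = l are exactly S_{p^k t + l}, 0 <= t <= p-2, and the sign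
   (-1)^[t < (p-1)/2] is -1 for exactly half of them, so their contributions
   cancel.  Summing over all tails gives 0 at every vertex other than an S_i. *)

From Pilot Require Import Defs.
From mathcomp Require Import all_boot all_order all_algebra.
From mathcomp Require Import zify.
Import GRing.Theory.
Local Open Scope ring_scope.

Lemma sum_sign_halves (R : pzRingType) (d h : nat) (f : nat -> R) : (0 < d)%N ->
  \sum_(0 <= i < (h + h) * d) (-1) ^+ (i %/ d < h)%N * f (i %% d)%N = 0.
Proof.
move=> d_gt0; rewrite mulnDl (big_cat_nat _ (leq_addr _ _)) //=.
rewrite -{2}[(h * d)%N]add0n big_addn addnK -big_split /=.
apply: big1_seq => i /andP[_]; rewrite mem_index_iota => /andP[_ lt_i_hd].
have -> : ((i + h * d) %/ d < h)%N = false by rewrite addnC divnMDl // ltnNge leq_addr.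
rewrite ltn_divLR // lt_i_hd addnC modnMDl expr1 expr0 mulN1r mul1r.
by rewrite addNr.
Qed.

Lemma odd_pred_halves (p : nat) : odd p -> (p - 1 = (p - 1)./2 + (p - 1)./2)%N.
Proof.
rewrite addnn -{1}[(p - 1)%N]odd_double_half; case: p => // q.
by rewrite subSS subn0 /= => /negbTE ->.
Qed.

Lemma sum_lists_of_cons (R : nmodType) (T : Type) (xs : seq T) (n : nat)
    (F : seq T -> R) :
  \sum_(P <- lists_of xs n.+1) F P = \sum_(Q <- lists_of xs n) \sum_(x <- xs) F (x :: Q).
Proof. by rewrite /= big_allpairs_dep exchange_big. Qed.

Definition up_edge (p k : nat) (a b : vtx) : bool :=
  (edge p k a b != None) && (vfloor k b == (vfloor k a).+1).

Lemma is_path_cons p k v u rest :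
  is_path p k v (u :: rest) = [&& is_start p k u, path (up_edge p k) u rest & last u rest == v].
Proof. by []. Qed.

(* Inversions among B^3, B^4, ..., where B^j is entry j - 3 of [bs]. *)
Definition tail_inv (bs : seq (nat * nat)) : nat :=
  \sum_(3 <= i < (size bs).+3) \sum_(i.+1 <= j < (size bs).+3)
     ((nth (0, 0) bs (j - 3)).1 < (nth (0, 0) bs (i - 3)).1)%N &&
     ((nth (0, 0) bs (i - 3)).2 < (nth (0, 0) bs (j - 3)).2)%N.

Lemma inv_cons p k b bs :
  Defs.inv p k (b :: bs) = ([exists t : 'I_((p - 1)./2), b.1 == p ^ k * t] + tail_inv bs)%N.
Proof.
case: b => m2 n2; rewrite /Defs.inv /tail_inv /=; congr (_ + _)%N.
apply: eq_big_nat => i /andP[i_ge3 _]; apply: eq_big_nat => j /andP[j_gti _].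
by have [-> ->] : (j - 2 = (j - 3).+1 /\ i - 2 = (i - 3).+1)%N by lia.
Qed.

Lemma exists_half_mul (p k q : nat) : (0 < p ^ k)%N ->
  [exists t : 'I_((p - 1)./2), p ^ k * q == p ^ k * t]%N = (q < (p - 1)./2)%N.
Proof.
move=> pk_gt0; apply/existsP/idP => [[t]|lt_q]; last by exists (Ordinal lt_q).
by rewrite eqn_pmul2l // => /eqP ->.
Qed.

Definition path_weight (p k : nat) (v : vtx) (P : seq vtx) : int :=
  if is_path p k v P then (-1) ^+ Defs.inv p k (blocks p k P) else 0.

Lemma signed_count_lists p k v :
  signed_count p k v =
  \sum_(P <- lists_of (column p k (vlevel v)) (vfloor k v - 2 * k)) path_weight p k v P.
Proof. by rewrite /signed_count /paths_to big_filter big_mkcond. Qed.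

Lemma filter_start_column p k smax :
  filter (is_start p k) (column p k smax) = [seq VS i | i <- iota 0 (p ^ k * (p - 1))].
Proof.
rewrite /column !filter_cat filter_map.
rewrite (@eq_in_filter _ _ predT) => [|i]; last by rewrite mem_iota.
rewrite filter_predT (@eq_in_filter _ _ pred0) => [|x /allpairsP[[? ?] [_ _ ->]]] //.
rewrite (@eq_in_filter _ _ pred0 [seq VW _ _ | _ <- _, _ <- _]).
  by rewrite !filter_pred0 !cats0.
by move=> x /allpairsP[[? ?] [_ _ ->]].
Qed.

Section StartVertex.

Variables (p k : nat) (v : vtx).
Hypotheses (odd_p : odd p) (pk_gt0 : (0 < p ^ k)%N) (v_notS : forall i, v != VS i).

Lemma path_weight_nonstart u Q : ~~ is_start p k u -> path_weight p k v (u :: Q) = 0.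
Proof. by rewrite /path_weight is_path_cons => /negbTE ->. Qed.

Lemma path_weight_start i l rest : (i < p ^ k * (p - 1))%N ->
  path_weight p k v [:: VS i, VV 1 l & rest] =
  (-1) ^+ (i %/ p ^ k < (p - 1)./2)%N *
  (if (i %% p ^ k == l)%N then
     (-1) ^+ tail_inv (blocks p k (VV 1 l :: rest))
       *+ [&& (l < p ^ k)%N, path (up_edge p k) (VV 1 l) rest & last (VV 1 l) rest == v]
   else 0).
Proof.
move=> lt_i; rewrite /path_weight is_path_cons /= lt_i.
have floor_V1 : vfloor k (VV 1 l) = (vfloor k (VS i)).+1 by rewrite /=; lia.
rewrite {1}/up_edge floor_V1 eqxx andbT /= lt_i.
case: (l < p ^ k)%N; case: (i %% p ^ k == l)%N; rewrite /= ?mulr0 //.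
case: (path _ _ _); case: (last _ _ == v); rewrite /= ?mulr0 ?mulr1n //.
by rewrite inv_cons /= exists_half_mul // exprD.
Qed.

Lemma path_weight_noedge i w rest : (forall l, w != VV 1 l) ->
  path_weight p k v [:: VS i, w & rest] = 0.
Proof.
case: w => [?|[|[|?]] l|? ?] hw; rewrite /path_weight is_path_cons //= ?andbF //.
by case/negP: (hw l).
Qed.

Lemma sum_start_vertices Q :
  \sum_(0 <= i < p ^ k * (p - 1)) path_weight p k v (VS i :: Q) = 0.
Proof.
case: Q => [|w rest].
  apply: big1 => i _; rewrite /path_weight is_path_cons /=.
  by rewrite eq_sym (negbTE (v_notS i)) !andbF.
have [[l ->]|noedge] : (exists l, w = VV 1 l) \/ (forall l, w != VV 1 l).
- by case: w => [j|[|[|s]] l|s l]; [right | right | left; exists l | right | right].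
- under eq_big_seq => i.
    by rewrite mem_index_iota => /andP[_ lt_i]; rewrite path_weight_start //; over.
  set c := (_ *+ _); rewrite {1}odd_pred_halves // mulnC.
  exact: (@sum_sign_halves _ (p ^ k) (p - 1)./2 (fun j => if j == l then c else 0) pk_gt0).
- by apply: big1 => i _; apply: path_weight_noedge.
Qed.

Lemma signed_count_eq0 : signed_count p k v = 0.
Proof.
rewrite signed_count_lists; case: (vfloor k v - 2 * k)%N => [|n].
  by rewrite big_seq1.
rewrite sum_lists_of_cons big1 // => Q _.
rewrite (bigID (is_start p k)) /= [X in _ + X]big1 ?addr0; last first.
  by move=> u /path_weight_nonstart.
rewrite -big_filter filter_start_column big_map.
by have := sum_start_vertices Q; rewrite /index_iota subn0.
Qed.

End StartVertex.

Local Close Scope ring_scope.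

Theorem mainTheorem1 (p k : nat) :
  prime p -> odd p ->
  forall s : nat, 1 <= s ->
    (forall l : nat, l < p ^ k -> signed_count p k (VV s l) = 0%R) /\
    (forall l' : nat, l' < p ^ k.+1 -> signed_count p k (VW s.+1 l') = 0%R).
Proof.
move=> p_prime odd_p s _; have pk_gt0 : 0 < p ^ k by rewrite expn_gt0 prime_gt0.
by split=> l _; apply: signed_count_eq0.
Qed.
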